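(* Let $H_1$ and $H_2$ be simple, undirected, connected graphs of girth at least $6$ on the same vertex set $V$. Suppose that $H_1^2 = H_2^2$ and that $u,v,w \in V$ are three vertices such that $uvw$ is a path in both $H_1$ and $H_2$ (i.e. $uv$ and $vw$ are edges of both $H_1$ and $H_2$, with $u,v,w$ distinct). Then $H_1 = H_2$, i.e. $H_1$ and $H_2$ have exactly the same edge set.
   Context: For a simple, undirected, connected graph $H$, its square $H^2$ is the graph on the same vertex set in which two distinct vertices are adjacent if and only if their distance in $H$ is at most $2$. The girth of a graph is the length of its shortest cycle ($\infty$ for a tree). *)

From mathcomp Require Import all_boot.
Set Implicit Arguments. Unset Strict Implicit. Unset Printing Implicit Defensive.

Definition simple_graph (T : finType) (e : rel T) : Prop :=
  symmetric e /\ irreflexive e.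

Definition connected_graph (T : finType) (e : rel T) : Prop :=
  forall x y : T, connect e x y.

Definition girth_ge (T : finType) (e : rel T) (g : nat) : Prop :=
  forall s : seq T, uniq s -> 3 <= size s -> cycle e s -> g <= size s.

Definition sq_graph (T : finType) (e : rel T) : rel T :=
  fun x y => (x != y) && (e x y || [exists z, e x z && e z y]).

From mathcomp Require Import all_boot.
Set Implicit Arguments. Unset Strict Implicit. Unset Printing Implicit Defensive.

(* In a graph of girth at least 6, the ends of a path x y z t with x != z and
   y != t are not adjacent in the square. Let u v w be a common path. A vertex
   adjacent to v (or to an end of the path) in one graph but reached only by a
   detour in the other yields such a path in the other graph between two
   vertices that are close in the first; hence v and u have the same neighbours
   in both graphs. Whenever two adjacent vertices p x do, so does every
   neighbour of x, and connectivity spreads this to all vertices. *)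

Section Girth6.
Variables (T : finType) (e : rel T).
Hypotheses (e_simple : simple_graph e) (e_girth6 : girth_ge e 6).

Lemma edge_neq x y : e x y -> x != y.
Proof. by case: e_simple => _ irr exy; apply: contraTneq exy => ->; rewrite irr. Qed.

Lemma sq_graph_edge x y : e x y -> sq_graph e x y.
Proof. by move=> exy; rewrite /sq_graph (edge_neq exy) exy. Qed.

Lemma sq_graph_path2 x z y : e x z -> e z y -> x != y -> sq_graph e x y.
Proof.
move=> exz ezy nxy; rewrite /sq_graph nxy; apply/orP; right.
by apply/existsP; exists z; rewrite exz.
Qed.

Lemma short_cycleN s : uniq s -> 3 <= size s <= 5 -> ~~ cycle e s.
Proof.
move=> s_uniq /andP[s_ge3 s_le5]; apply/negP => s_cycle.
by have := e_girth6 s_uniq s_ge3 s_cycle; rewrite leqNgt ltnS s_le5.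
Qed.

Lemma no_triangle a b c : e a b -> e b c -> e c a -> False.
Proof.
move=> eab ebc eca; apply: (negP (@short_cycleN [:: a; b; c] _ _)) => /=.
- by rewrite !inE !negb_or (edge_neq eab) (edge_neq ebc) (eq_sym a c) (edge_neq eca).
- by [].
- by rewrite eab ebc eca.
Qed.

Lemma path3_not_sq a b c d :
  e a b -> e b c -> e c d -> a != c -> b != d -> ~~ sq_graph e a d.
Proof.
case: e_simple => e_sym _ eab ebc ecd nac nbd.
have nab := edge_neq eab; have nbc := edge_neq ebc; have ncd := edge_neq ecd.
rewrite /sq_graph; have [//|nad] := eqVneq a d; apply/norP; split.
- apply/negP => ead; apply: (negP (@short_cycleN [:: a; b; c; d] _ _)) => /=.
  + by rewrite !inE !negb_or nab nac nad nbc nbd ncd.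
  + by [].
  + by rewrite eab ebc ecd e_sym ead.
- apply/negP => /existsP[z /andP[eaz ezd]].
  have [zb | nzb] := eqVneq z b; first by apply: (no_triangle ebc ecd); rewrite e_sym -zb.
  have [zc | nzc] := eqVneq z c; first by apply: (no_triangle eab ebc); rewrite e_sym -zc.
  have naz := edge_neq eaz; have nzd := edge_neq ezd.
  apply: (negP (@short_cycleN [:: a; b; c; d; z] _ _)) => /=.
  + by rewrite !inE !negb_or nab nac nad naz nbc nbd ncd !(eq_sym _ z) nzb nzc nzd.
  + by [].
  + by rewrite eab ebc ecd e_sym ezd e_sym eaz.
Qed.

End Girth6.

Section SameSquare.
Variables (T : finType) (e1 e2 : rel T).
Hypotheses (e1_simple : simple_graph e1) (e2_simple : simple_graph e2).
Hypotheses (e1_girth6 : girth_ge e1 6) (e2_girth6 : girth_ge e2 6).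
Hypothesis sq12 : sq_graph e1 =2 sq_graph e2.

Lemma mid_nbhd_sub u v w x :
  u != w -> e1 u v -> e1 v w -> e2 u v -> e2 v w -> e1 v x -> e2 v x.
Proof.
have [[e1_sym _] [e2_sym _]] := (e1_simple, e2_simple).
move=> nuw e1uv e1vw e2uv e2vw e1vx.
have [-> | nxu] := eqVneq x u; first by rewrite e2_sym.
have [-> // | nxw] := eqVneq x w.
have /andP[_ /orP[// | /existsP[y /andP[e2vy e2yx]]]] : sq_graph e2 v x.
  by rewrite -sq12 (sq_graph_edge e1_simple e1vx).
(* As u != w, one of them avoids y; call it t. Then t v x is a path of e1 and
   t v y x one of e2. *)
have [t [e1tv e2tv ntx nty]] : exists t, [/\ e1 t v, e2 t v, t != x & t != y].
  have [-> | nyu] := eqVneq y u; last by exists u; split; rewrite // eq_sym.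
  by exists w; split; rewrite 1?e1_sym 1?e2_sym // eq_sym.
have := path3_not_sq e2_simple e2_girth6 e2tv e2vy e2yx nty (edge_neq e1_simple e1vx).
by rewrite -sq12 (sq_graph_path2 e1tv e1vx ntx).
Qed.

Lemma end_nbhd_sub c a b y :
  e1 c a -> e2 c a -> e1 a b -> e2 a b -> c != b -> e1 b y -> e2 b y.
Proof.
case: e2_simple => e2_sym _ e1ca e2ca e1ab e2ab ncb e1by.
have [-> | nya] := eqVneq y a; first by rewrite e2_sym.
have nay : a != y by rewrite eq_sym.
have nyc : y != c.
  by apply/eqP => yc; apply: (no_triangle e1_simple e1_girth6 e1ca e1ab); rewrite -yc.
have not_sq_cy : ~~ sq_graph e2 c y.
  by rewrite -sq12 (path3_not_sq e1_simple e1_girth6 e1ca e1ab e1by).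
have /andP[_ /orP[e2ay | /existsP[z /andP[e2az e2zy]]]] : sq_graph e2 a y.
  by rewrite -sq12 (sq_graph_path2 e1ab e1by).
- by rewrite (sq_graph_path2 e2ca e2ay) // eq_sym in not_sq_cy.
- have [-> // | nbz] := eqVneq b z.
  have e2ba : e2 b a by rewrite e2_sym.
  have := path3_not_sq e2_simple e2_girth6 e2ba e2az e2zy nbz nay.
  by rewrite -sq12 (sq_graph_edge e1_simple e1by).
Qed.

End SameSquare.

Section Propagation.
Variables (T : finType) (e1 e2 : rel T).
Hypotheses (e1_simple : simple_graph e1) (e2_simple : simple_graph e2).
Hypotheses (e1_girth6 : girth_ge e1 6) (e2_girth6 : girth_ge e2 6).
Hypothesis sq12 : sq_graph e1 =2 sq_graph e2.

Let sq21 : sq_graph e2 =2 sq_graph e1. Proof. by move=> x y; rewrite sq12. Qed.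

Definition same_nbhd x := e1 x =1 e2 x.

Lemma same_nbhd_mid u v w :
  u != w -> e1 u v -> e1 v w -> e2 u v -> e2 v w -> same_nbhd v.
Proof.
move=> nuw e1uv e1vw e2uv e2vw x; apply/idP/idP.
- exact: (mid_nbhd_sub e1_simple e2_simple e2_girth6 sq12 nuw).
- exact: (mid_nbhd_sub e2_simple e1_simple e1_girth6 sq21 nuw).
Qed.

Lemma same_nbhd_end c a b :
  e1 c a -> e2 c a -> e1 a b -> e2 a b -> c != b -> same_nbhd b.
Proof.
move=> e1ca e2ca e1ab e2ab ncb y; apply/idP/idP.
- exact: (end_nbhd_sub e1_simple e2_simple e1_girth6 e2_girth6 sq12 e1ca e2ca e1ab e2ab ncb).
- exact: (end_nbhd_sub e2_simple e1_simple e2_girth6 e1_girth6 sq21 e2ca e1ca e2ab e1ab ncb).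
Qed.

Lemma same_nbhd_step p x y :
  same_nbhd p -> same_nbhd x -> e1 p x -> e1 x y -> same_nbhd y.
Proof.
move=> Np Nx e1px e1xy; have [<- // | npy] := eqVneq p y.
by apply: (same_nbhd_end e1px _ e1xy _ npy); rewrite -?Np -?Nx.
Qed.

Lemma same_nbhd_path p x s :
  same_nbhd p -> same_nbhd x -> e1 p x -> path e1 x s -> same_nbhd (last x s).
Proof.
elim: s p x => [|y s IHs] p x Np Nx e1px //= /andP[e1xy e1_path].
exact: IHs (same_nbhd_step Np Nx e1px e1xy) e1xy e1_path.
Qed.

End Propagation.

Theorem lemma1 (T : finType) (e1 e2 : rel T) (u v w : T) :
  simple_graph e1 -> simple_graph e2 ->
  connected_graph e1 -> connected_graph e2 ->
  girth_ge e1 6 -> girth_ge e2 6 ->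
  sq_graph e1 =2 sq_graph e2 ->
  u != v -> v != w -> u != w ->
  e1 u v -> e1 v w -> e2 u v -> e2 v w ->
  e1 =2 e2.
Proof.
move=> S1 S2 e1_connected _ g1 g2 sq12 _ _ nuw e1uv e1vw e2uv e2vw x.
have Nv := same_nbhd_mid S1 S2 g1 g2 sq12 nuw e1uv e1vw e2uv e2vw.
have Nu : same_nbhd e1 e2 u.
  have [[e1_sym _] [e2_sym _]] := (S1, S2).
  apply: (same_nbhd_end S1 S2 g1 g2 sq12 (a := v) (c := w));
    by rewrite 1?e1_sym 1?e2_sym // eq_sym.
have /connectP[s e1_path ->] := e1_connected v x.
exact: (same_nbhd_path S1 S2 g1 g2 sq12 Nu Nv e1uv e1_path).
Qed.
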